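(* Let $0<a<m$ and consider, on the region $a<\rho<\sqrt{4m^2+a^2}$ of the plane (polar coordinates $(\rho,\varphi)$), the functions $$r=\sqrt{\rho^2-a^2},\qquad K=\frac{2m}{r},\qquad b_\rho=\frac{r}{\rho},\qquad b_\varphi=\frac{a}{\rho},$$ so that $b_\rho^2+b_\varphi^2=1$ and $K>1$ on this region (the ergoregion). The radial parts of the two families of zero-energy null geodesics (parametrized by $t$) are $$\frac{d\rho^+}{dt}=\frac{(Kb_\rho^2-1)\sqrt{K-1}}{-Kb_\rho\sqrt{K-1}-Kb_\varphi},\qquad \frac{d\rho^-}{dt}=\frac{-(Kb_\rho^2-1)\sqrt{K-1}}{Kb_\rho\sqrt{K-1}-Kb_\varphi}=-\frac{\sqrt{K-1}\,\bigl(Kb_\rho\sqrt{K-1}+Kb_\varphi\bigr)}{K^2},$$ (the second expression for $d\rho^-/dt$ being its continuous extension). Then: (i) the denominator of $d\rho^+/dt$ never vanishes on the region, and $d\rho^+/dt=0$ exactly on the two circles where $r=r_\pm:=m\pm\sqrt{m^2-a^2}$ (equivalently $Kb_\rho^2=1$); these two circles are invariant under the $(+)$ flow, i.e. the $(+)$ family produces two horizons; (ii) $d\rho^-/dt<0$ everywhere on the region, so $\rho^-(t)$ is strictly decreasing along every $(-)$ trajectory and the $(-)$ family produces no horizon.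
   Context: This is the $2+1$ reduction of the Kerr metric (Kerr–Schild form) to the equatorial plane $z=0$, $\xi_z=0$, with Hamiltonian $H=\tau^2-\xi_\rho^2-(\xi_\varphi/\rho)^2+K(-\tau+b_\rho\xi_\rho+b_\varphi\xi_\varphi/\rho)^2$. Zero-energy null geodesics are the null bicharacteristics of $H$ with $\tau=0$, reparametrized by the time $t$; on the characteristic set one has $\xi_\rho=\frac{-Kb_\rho b_\varphi\pm\sqrt{K-1}}{Kb_\rho^2-1}\,\xi_\varphi/\rho$, and the sign $\pm$ defines the $(\pm)$ family. A horizon produced by a family is a circle $\{\rho=\text{const}\}$ in the ergoregion that is a closed trajectory (limit cycle) of that family. *)

From Stdlib Require Import Reals Lra.
Open Scope R_scope.

(* Equatorial Kerr quantities, as functions of the polar radius rho,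
   with parameters m (mass) and a (rotation). *)
Definition rr (a rho : R) : R := sqrt (rho ^ 2 - a ^ 2).
Definition KK (m a rho : R) : R := 2 * m / rr a rho.
Definition b_rho (a rho : R) : R := rr a rho / rho.
Definition b_phi (a rho : R) : R := a / rho.

Definition in_region (m a rho : R) : Prop :=
  a < rho < sqrt (4 * m ^ 2 + a ^ 2).

Definition den_plus (m a rho : R) : R :=
  - KK m a rho * b_rho a rho * sqrt (KK m a rho - 1) - KK m a rho * b_phi a rho.

Definition drho_plus (m a rho : R) : R :=
  (KK m a rho * b_rho a rho ^ 2 - 1) * sqrt (KK m a rho - 1) / den_plus m a rho.

Definition den_minus (m a rho : R) : R :=
  KK m a rho * b_rho a rho * sqrt (KK m a rho - 1) - KK m a rho * b_phi a rho.

Definition drho_minus_raw (m a rho : R) : R :=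
  - (KK m a rho * b_rho a rho ^ 2 - 1) * sqrt (KK m a rho - 1) / den_minus m a rho.

(* Its continuous extension, used as the definition of d rho^- / dt. *)
Definition drho_minus (m a rho : R) : R :=
  - (sqrt (KK m a rho - 1)
       * (KK m a rho * b_rho a rho * sqrt (KK m a rho - 1) + KK m a rho * b_phi a rho))
    / KK m a rho ^ 2.

Definition r_plus (m a : R) : R := m + sqrt (m ^ 2 - a ^ 2).
Definition r_minus (m a : R) : R := m - sqrt (m ^ 2 - a ^ 2).

Definition radial_solution (m a : R) (f : R -> R) (t0 t1 : R) (x : R -> R) : Prop :=
  forall t, t0 < t < t1 -> in_region m a (x t) /\ derivable_pt_lim x t (f (x t)).

From Stdlib Require Import Reals Lra Psatz.
From Coquelicot Require Import Coquelicot.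
Open Scope R_scope.

(* In terms of r = sqrt(rho^2 - a^2) the ergoregion is 0 < r < 2m, and there
   K b_rho^2 = 2 m r / (r^2 + a^2), so K b_rho^2 = 1 is the quadratic
   r^2 - 2 m r + a^2 = 0 with roots r_+ and r_-, both in (0, 2m).  The
   denominator of d rho^+/dt is minus the positive quantity
   K b_rho sqrt(K-1) + K b_phi, so d rho^+/dt vanishes exactly where
   K b_rho^2 = 1.  The same quantity makes d rho^-/dt negative; the two
   expressions for it agree because b_rho^2 + b_phi^2 = 1 gives
   (K b_rho s - K b_phi)(K b_rho s + K b_phi) = K^2 (K b_rho^2 - 1) with
   s = sqrt(K-1).  A negative derivative forces strict decrease by the mean
   value theorem, which excludes stationary (-) trajectories. *)

Lemma rr_sqr a rho : 0 <= a < rho -> rr a rho ^ 2 = rho ^ 2 - a ^ 2.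
Proof. intros Hr. unfold rr. rewrite pow2_sqrt; nra. Qed.

Lemma rr_pos a rho : 0 <= a < rho -> 0 < rr a rho.
Proof. intros Hr. apply sqrt_lt_R0. nra. Qed.

Lemma rr_sqrt r a : 0 <= r -> rr a (sqrt (r ^ 2 + a ^ 2)) = r.
Proof.
  intros Hr. unfold rr. rewrite pow2_sqrt by nra.
  replace (r ^ 2 + a ^ 2 - a ^ 2) with (r ^ 2) by ring.
  apply sqrt_pow2; lra.
Qed.

Lemma rr_lt_2m m a rho : 0 < a -> 0 < m -> in_region m a rho -> rr a rho < 2 * m.
Proof.
  intros Ha Hm [Hlo Hhi].
  pose proof (rr_sqr a rho ltac:(lra)). pose proof (rr_pos a rho ltac:(lra)).
  pose proof (sqrt_pos (4 * m ^ 2 + a ^ 2)).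
  pose proof (pow2_sqrt (4 * m ^ 2 + a ^ 2) ltac:(nra)).
  apply Rsqr_incrst_0; unfold Rsqr; nra.
Qed.

Lemma in_region_sqrt m a r : 0 < a -> 0 < r < 2 * m ->
  in_region m a (sqrt (r ^ 2 + a ^ 2)).
Proof.
  intros Ha Hr.
  pose proof (sqrt_pos (r ^ 2 + a ^ 2)).
  pose proof (pow2_sqrt (r ^ 2 + a ^ 2) ltac:(nra)).
  pose proof (sqrt_pos (4 * m ^ 2 + a ^ 2)).
  pose proof (pow2_sqrt (4 * m ^ 2 + a ^ 2) ltac:(nra)).
  split; apply Rsqr_incrst_0; unfold Rsqr; nra.
Qed.

Lemma KK_gt1 m a rho : 0 < rr a rho < 2 * m -> 1 < KK m a rho.
Proof.
  intros Hr. unfold KK.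
  apply (Rmult_lt_reg_r (rr a rho)); [lra |].
  field_simplify; lra.
Qed.

Lemma b_rho_pos a rho : 0 <= a < rho -> 0 < b_rho a rho.
Proof. intros Hr. apply Rdiv_lt_0_compat; [apply rr_pos |]; lra. Qed.

Lemma b_phi_pos a rho : 0 < a < rho -> 0 < b_phi a rho.
Proof. intros Hr. apply Rdiv_lt_0_compat; lra. Qed.

Lemma b_rho_sqr_add_b_phi_sqr a rho : 0 <= a < rho ->
  b_rho a rho ^ 2 + b_phi a rho ^ 2 = 1.
Proof.
  intros Hr. unfold b_rho, b_phi.
  replace ((rr a rho / rho) ^ 2) with (rr a rho ^ 2 / rho ^ 2) by (field; lra).
  rewrite rr_sqr by lra. field. lra.
Qed.

Lemma KK_mul_b_rho_sqr m a rho : 0 <= a < rho ->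
  KK m a rho * b_rho a rho ^ 2 = 2 * m * rr a rho / (rr a rho ^ 2 + a ^ 2).
Proof.
  intros Hr. pose proof (rr_pos a rho Hr).
  rewrite rr_sqr by lra. unfold KK, b_rho.
  replace (rho ^ 2 - a ^ 2 + a ^ 2) with (rho ^ 2) by ring.
  field. lra.
Qed.

Lemma conjugate_product_eq K b c s : s ^ 2 = K - 1 -> b ^ 2 + c ^ 2 = 1 ->
  (K * b * s - K * c) * (K * b * s + K * c) = K ^ 2 * (K * b ^ 2 - 1).
Proof.
  intros Hs Hb.
  transitivity (K ^ 2 * (b ^ 2 * s ^ 2 - c ^ 2)); [ring |].
  rewrite Hs. replace (c ^ 2) with (1 - b ^ 2) by lra. ring.
Qed.

Lemma horizon_radius_iff m a r : 0 <= a <= m ->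
  (r = r_plus m a \/ r = r_minus m a) <-> r ^ 2 - 2 * m * r + a ^ 2 = 0.
Proof.
  intros Ham. unfold r_plus, r_minus.
  pose proof (pow2_sqrt (m ^ 2 - a ^ 2) ltac:(nra)).
  set (q := sqrt (m ^ 2 - a ^ 2)) in *.
  split.
  - intros [-> | ->]; nra.
  - intros E.
    assert (Hfac : (r - m - q) * (r - m + q) = 0) by nra.
    destruct (Rmult_integral _ _ Hfac); [left | right]; lra.
Qed.

Lemma horizon_radii_bounds m a : 0 < a < m ->
  0 < r_minus m a /\ r_minus m a < r_plus m a /\ r_plus m a < 2 * m.
Proof.
  intros Ham. unfold r_plus, r_minus.
  pose proof (pow2_sqrt (m ^ 2 - a ^ 2) ltac:(nra)).
  assert (0 < sqrt (m ^ 2 - a ^ 2)) by (apply sqrt_lt_R0; nra).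
  assert (sqrt (m ^ 2 - a ^ 2) < m) by (apply Rsqr_incrst_0; unfold Rsqr; nra).
  lra.
Qed.

Section Ergoregion.

Variables m a : R.
Hypothesis Ha : 0 < a.
Hypothesis Ham : a < m.

Lemma ergoregion_KK_gt1 rho : in_region m a rho -> 1 < KK m a rho.
Proof.
  intros Hr. apply KK_gt1. split.
  - apply rr_pos. destruct Hr; lra.
  - apply rr_lt_2m; auto. lra.
Qed.

Lemma on_horizon_iff rho : in_region m a rho ->
  (rr a rho = r_plus m a \/ rr a rho = r_minus m a) <->
  KK m a rho * b_rho a rho ^ 2 = 1.
Proof.
  intros [Hlo _].
  pose proof (rr_pos a rho ltac:(lra)).
  rewrite KK_mul_b_rho_sqr, horizon_radius_iff by lra.
  split; intros E.
  - rewrite <- (Rdiv_diag (rr a rho ^ 2 + a ^ 2)) by nra. f_equal. lra.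
  - apply Rmult_eq_compat_r with (r := rr a rho ^ 2 + a ^ 2) in E.
    unfold Rdiv in E. rewrite Rmult_assoc, Rinv_l in E by nra. lra.
Qed.

Lemma flow_speed_pos rho : in_region m a rho ->
  0 < KK m a rho * b_rho a rho * sqrt (KK m a rho - 1) + KK m a rho * b_phi a rho.
Proof.
  intros Hr. pose proof (ergoregion_KK_gt1 rho Hr). destruct Hr as [Hlo _].
  pose proof (b_rho_pos a rho ltac:(lra)). pose proof (b_phi_pos a rho ltac:(lra)).
  pose proof (sqrt_lt_R0 (KK m a rho - 1) ltac:(lra)).
  apply Rplus_lt_0_compat; [apply Rmult_lt_0_compat; [apply Rmult_lt_0_compat |] |
    apply Rmult_lt_0_compat]; lra.
Qed.

Lemma den_plus_neg rho : in_region m a rho -> den_plus m a rho < 0.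
Proof. intros Hr. pose proof (flow_speed_pos rho Hr). unfold den_plus. lra. Qed.

Lemma drho_plus_eq0_iff rho : in_region m a rho ->
  drho_plus m a rho = 0 <-> KK m a rho * b_rho a rho ^ 2 = 1.
Proof.
  intros Hr. pose proof (den_plus_neg rho Hr).
  pose proof (sqrt_lt_R0 (KK m a rho - 1) ltac:(pose proof (ergoregion_KK_gt1 rho Hr); lra)).
  unfold drho_plus. split.
  - intros E. apply Rmult_eq_compat_r with (r := den_plus m a rho) in E.
    field_simplify in E; [nra | lra].
  - intros ->. unfold Rdiv. ring.
Qed.

Lemma drho_minus_neg rho : in_region m a rho -> drho_minus m a rho < 0.
Proof.
  intros Hr. pose proof (flow_speed_pos rho Hr).
  pose proof (ergoregion_KK_gt1 rho Hr).
  pose proof (sqrt_lt_R0 (KK m a rho - 1) ltac:(lra)).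
  unfold drho_minus, Rdiv. rewrite Ropp_mult_distr_l_reverse.
  apply Ropp_lt_gt_0_contravar, Rmult_lt_0_compat.
  - apply Rmult_lt_0_compat; lra.
  - apply Rinv_0_lt_compat. nra.
Qed.

Lemma drho_minus_raw_eq rho : in_region m a rho -> den_minus m a rho <> 0 ->
  drho_minus_raw m a rho = drho_minus m a rho.
Proof.
  intros Hr HD. pose proof (ergoregion_KK_gt1 rho Hr).
  pose proof (b_rho_sqr_add_b_phi_sqr a rho ltac:(destruct Hr; lra)) as Hb.
  pose proof (pow2_sqrt (KK m a rho - 1) ltac:(lra)) as Hs.
  unfold drho_minus_raw, drho_minus. unfold den_minus in *.
  set (K := KK m a rho) in *. set (b := b_rho a rho) in *.
  set (c := b_phi a rho) in *. set (s := sqrt (K - 1)) in *.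
  replace (K * b ^ 2 - 1) with ((K * b * s - K * c) * (K * b * s + K * c) / K ^ 2)
    by (rewrite conjugate_product_eq by assumption; field; lra).
  field. split; lra.
Qed.

Lemma horizons_exist : exists rho1 rho2,
  in_region m a rho1 /\ in_region m a rho2 /\ rho1 <> rho2 /\
  rr a rho1 = r_minus m a /\ rr a rho2 = r_plus m a.
Proof.
  pose proof (horizon_radii_bounds m a ltac:(lra)).
  exists (sqrt (r_minus m a ^ 2 + a ^ 2)), (sqrt (r_plus m a ^ 2 + a ^ 2)).
  rewrite !rr_sqrt by lra.
  split; [apply in_region_sqrt; lra |].
  split; [apply in_region_sqrt; lra |].
  split; [| split; reflexivity].
  intros E. apply (f_equal (rr a)) in E. rewrite !rr_sqrt in E; lra.
Qed.

End Ergoregion.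

Lemma strict_decreasing_of_neg_derivative (x f : R -> R) t0 t1 :
  (forall t, t0 < t < t1 -> derivable_pt_lim x t (f t) /\ f t < 0) ->
  forall s t, t0 < s -> s < t -> t < t1 -> x t < x s.
Proof.
  intros Hx s t Hs Hst Ht.
  destruct (MVT_gen x s t f) as [c [Hc E]].
  - intros u Hu. apply is_derive_Reals, Hx.
    rewrite Rmin_left, Rmax_right in Hu; lra.
  - intros u Hu. apply derivable_continuous_pt. exists (f u). apply Hx.
    rewrite Rmin_left, Rmax_right in Hu; lra.
  - rewrite Rmin_left, Rmax_right in Hc by lra.
    assert (f c < 0) by (apply Hx; lra).
    assert (f c * (t - s) < 0) by nra.
    lra.
Qed.

Theorem theorem3p1 (m a : R) (Ha : 0 < a) (Ham : a < m) :
  (forall rho, in_region m a rho ->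
     b_rho a rho ^ 2 + b_phi a rho ^ 2 = 1 /\ 1 < KK m a rho) /\
  (forall rho, in_region m a rho -> den_plus m a rho <> 0) /\
  (forall rho, in_region m a rho ->
     (drho_plus m a rho = 0 <->
      (rr a rho = r_plus m a \/ rr a rho = r_minus m a))) /\
  (forall rho, in_region m a rho ->
     ((rr a rho = r_plus m a \/ rr a rho = r_minus m a) <->
      KK m a rho * b_rho a rho ^ 2 = 1)) /\
  (exists rho1 rho2, in_region m a rho1 /\ in_region m a rho2 /\ rho1 <> rho2 /\
     rr a rho1 = r_minus m a /\ rr a rho2 = r_plus m a) /\
  (forall rho0, in_region m a rho0 ->
     (rr a rho0 = r_plus m a \/ rr a rho0 = r_minus m a) ->
     forall t0 t1, radial_solution m a (drho_plus m a) t0 t1 (fun _ => rho0)) /\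
  (forall rho, in_region m a rho -> den_minus m a rho <> 0 ->
     drho_minus_raw m a rho = drho_minus m a rho) /\
  (forall rho, in_region m a rho -> drho_minus m a rho < 0) /\
  (forall t0 t1 x, radial_solution m a (drho_minus m a) t0 t1 x ->
     forall s t, t0 < s -> s < t -> t < t1 -> x t < x s) /\
  (forall rho0 t0 t1, t0 < t1 ->
     ~ radial_solution m a (drho_minus m a) t0 t1 (fun _ => rho0)).
Proof.
  assert (Hplus0 : forall rho, in_region m a rho ->
    drho_plus m a rho = 0 <-> (rr a rho = r_plus m a \/ rr a rho = r_minus m a)).
  { intros rho Hr. rewrite drho_plus_eq0_iff, on_horizon_iff by assumption. tauto. }
  assert (Hdecr : forall t0 t1 x, radial_solution m a (drho_minus m a) t0 t1 x ->
    forall s t, t0 < s -> s < t -> t < t1 -> x t < x s).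
  { intros t0 t1 x Hx.
    apply (strict_decreasing_of_neg_derivative x (fun t => drho_minus m a (x t))).
    intros t Ht. destruct (Hx t Ht) as [Hr Hd]. split; [exact Hd |].
    apply drho_minus_neg; assumption. }
  split.
  { intros rho Hr. split; [| apply ergoregion_KK_gt1; assumption].
    apply b_rho_sqr_add_b_phi_sqr. destruct Hr; lra. }
  split; [intros rho Hr; pose proof (den_plus_neg m a Ha Ham rho Hr); lra |].
  split; [exact Hplus0 |].
  split; [apply on_horizon_iff; assumption |].
  split; [apply horizons_exist; assumption |].
  split.
  { intros rho0 Hr Hh t0 t1 t _. split; [exact Hr |].
    rewrite (proj2 (Hplus0 rho0 Hr) Hh). apply derivable_pt_lim_const. }
  split; [apply drho_minus_raw_eq; assumption |].
  split; [apply drho_minus_neg; assumption |].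
  split; [exact Hdecr |].
  intros rho0 t0 t1 Ht Hx.
  assert (Hlt := Hdecr t0 t1 _ Hx (t0 + (t1 - t0) / 3) (t0 + 2 * (t1 - t0) / 3)).
  lra.
Qed.
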